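(* Let $n\ge1$, let $\mathfrak{n}=\mathfrak{n}(n)$, $\operatorname{Der}(\mathfrak{n})_1$, $B$ and $\mathfrak{B}(B)$ be as in the context, and let $D\in\operatorname{Der}(\mathfrak{n})_1$. For $v\in\mathfrak{B}(B)$ let $\lambda_v$ denote the diagonal coefficient of the matrix of $D$ in the basis $\mathfrak{B}(B)$ corresponding to $v$ (i.e. the $v$-coordinate of $D(v)$). Then: (a) $\lambda_{e'_i}=0$ for $1\le i\le n$; (b) $\lambda_a=\lambda_b=\lambda_x$; (c) $\lambda_h=\lambda_f=3\lambda_a$; (d) $\lambda_y=\lambda_u=\lambda_c=2\lambda_a$.
   Context: Fix a field of characteristic zero and a positive integer $n$. The Lie algebra $\mathfrak{n}(n)$ has basis $e_1,\dots,e_n,a,b,x$; $u,y$; $e_i\wedge e_j$ ($1\le i<j\le n$); $c$; $x_1,\dots,x_n$; $u_1,\dots,u_n$; $y_1,\dots,y_n$; $f,h$. Its bracket is defined on basis elements by: $[e_i,e_j]=e_i\wedge e_j$ for $i<j$ (so $[e_j,e_i]=-e_i\wedge e_j$), $[e_i,x]=x_i$, $[e_i,u]=u_i$, $[e_i,y]=y_i$, $[a,b]=c$, $[a,y]=f$, $[a,c]=h$, $[b,u]=h$, $[b,y]=h$, $[x,u]=f$, $[x,y]=h$, extended by antisymmetry, and all other brackets of pairs of basis elements are zero. Let $E=\operatorname{span}\{e_1,\dots,e_n\}$ and let $W$ be the span of all the other basis vectors. Let $\operatorname{Der}(\mathfrak{n})_1$ be the set of derivations $D$ of $\mathfrak{n}$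 with $D(E)\subset W$. For a basis $B=\{e'_1,\dots,e'_n\}$ of $E$, put $x'_i=[e'_i,x]$, $u'_i=[e'_i,u]$, $y'_i=[e'_i,y]$, $e'_i\wedge e'_j=[e'_i,e'_j]$, and let $\mathfrak{B}(B)$ be the ordered basis $e'_1,\dots,e'_n,a,b,x,u,y,(e'_i\wedge e'_j)_{1\le i<j\le n}$ (lexicographic order), $c,x'_1,\dots,x'_n,u'_1,\dots,u'_n,y'_1,\dots,y'_n,f,h$. *)

From mathcomp Require Import all_boot all_algebra.
Set Implicit Arguments. Unset Strict Implicit. Unset Printing Implicit Defensive.
Import GRing.Theory.
Local Open Scope ring_scope.

(* pairs i < j indexing e_i /\ e_j *)
Definition wpair (n : nat) := {p : 'I_n * 'I_n | (p.1 < p.2)%N}.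

(* lbl n = e_i (i : 'I_n)
         + the 8 single vectors a,b,x,u,y,c,f,h (as 'I_8, in this order)
         + e_i/\e_j (i<j)
         + x_i,u_i,y_i (as ('I_3 * 'I_n), t = 0,1,2 for x,u,y) *)
Definition lbl (n : nat) : finType :=
  ('I_n + 'I_8 + wpair n + 'I_3 * 'I_n)%type.

Definition lE {n} (i : 'I_n) : lbl n := inl (inl (inl i)).
Definition lS {n} (k : nat) : lbl n := inl (inl (inr (inord k))).
Definition la {n} : lbl n := lS 0.
Definition lb {n} : lbl n := lS 1.
Definition lx {n} : lbl n := lS 2.
Definition lu {n} : lbl n := lS 3.
Definition ly {n} : lbl n := lS 4.
Definition lc {n} : lbl n := lS 5.
Definition lf {n} : lbl n := lS 6.
Definition lh {n} : lbl n := lS 7.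
Definition lW {n} (w : wpair n) : lbl n := inl (inr w).
Definition lT {n} (t : nat) (i : 'I_n) : lbl n := inr (inord t, i).

Definition nalg (F : fieldType) (n : nat) := {ffun lbl n -> F^o}.

Definition bv {F : fieldType} {n} (l : lbl n) : nalg F n :=
  [ffun k => (k == l)%:R].

(* table of the defining brackets [p,q] = r (all coefficients are 1) *)
Definition btab {n} (p q : lbl n) : option (lbl n) :=
  match p, q with
  | inl (inl (inl i)), inl (inl (inl j)) => omap lW (insub (i, j) : option (wpair n))
  | inl (inl (inl i)), inl (inl (inr k)) =>
      if val k == 2%N then Some (lT 0 i)
      else if val k == 3%N then Some (lT 1 i)
      else if val k == 4%N then Some (lT 2 i) else None
  | inl (inl (inr k)), inl (inl (inr l)) =>
      match val k, val l with
      | 0, 1 => Some lc   (* [a,b] = c *)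
      | 0, 4 => Some lf   (* [a,y] = f *)
      | 0, 5 => Some lh   (* [a,c] = h *)
      | 1, 3 => Some lh   (* [b,u] = h *)
      | 1, 4 => Some lh   (* [b,y] = h *)
      | 2, 3 => Some lf   (* [x,u] = f *)
      | 2, 4 => Some lh   (* [x,y] = h *)
      | _, _ => None
      end%N
  | _, _ => None
  end.

Definition bbr {F : fieldType} {n} (p q : lbl n) : nalg F n :=
  match btab p q with
  | Some r => bv r
  | None => match btab q p with Some r => - bv r | None => 0 end
  end.

Definition lie {F : fieldType} {n} (v w : nalg F n) : nalg F n :=
  \sum_p \sum_q (v p * w q) *: bbr p q.

Definition is_derivation {F : fieldType} {n} (D : {linear nalg F n -> nalg F n}) :=
  forall v w, D (lie v w) = lie (D v) w + lie v (D w).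

Definition is_e {n} (l : lbl n) : bool :=
  match l with inl (inl (inl _)) => true | _ => false end.

Definition inE {F : fieldType} {n} (v : nalg F n) := forall l, ~~ is_e l -> v l = 0.
Definition inW {F : fieldType} {n} (v : nalg F n) := forall l, is_e l -> v l = 0.

Definition Der1 {F : fieldType} {n} (D : {linear nalg F n -> nalg F n}) :=
  is_derivation D /\ forall v, inE v -> inW (D v).

Definition basis_of_E {F : fieldType} {n} (B : 'I_n -> nalg F n) :=
  [/\ forall i, inE (B i),
      forall c : 'I_n -> F, \sum_i c i *: B i = 0 -> forall i, c i = 0
    & forall v, inE v -> exists c : 'I_n -> F, v = \sum_i c i *: B i].

Definition frakB {F : fieldType} {n} (B : 'I_n -> nalg F n) (l : lbl n) : nalg F n :=
  match l with
  | inl (inl (inl i)) => B i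
  | inl (inl (inr k)) => bv (inl (inl (inr k)))
  | inl (inr w) => lie (B (val w).1) (B (val w).2)
  | inr (t, i) => lie (B i) (bv (lS (val t + 2)))
  end.

From Pilot Require Import Defs.
From mathcomp Require Import all_boot all_algebra ring.
Import GRing.Theory.
Local Open Scope ring_scope.
Set Implicit Arguments. Unset Strict Implicit.

(* Write [dcoef D p r] for the [r]-coordinate of [D] applied to the standard
   basis vector [p].  Reading the Leibniz rule for a bracket [[p, q]] among
   a, b, x, u, y, c, f, h at one coordinate gives a linear relation between
   these coefficients (e.g. [[a, b] = c] gives d_cc = d_aa + d_bb), and reading
   [[e_i, a] = [e_i, b] = 0] at x_i and [[e_i, c] = 0] at u_i kills d_ax, d_bx
   and d_cu.  These relations force d_aa = d_bb = d_xx,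
   d_yy = d_uu = d_cc = 2 d_aa and d_ff = d_hh = 3 d_aa; no division occurs.  As the e'_i lie in E, and brackets
   with an element of E have no component along a, ..., h, these coordinates
   of frakB(B) are those of the standard basis, so the diagonal entries of the
   matrix are the d's.  Finally D(e'_i) lies in W, so the E-block of the
   matrix vanishes by the independence of the e'_i. *)

Definition is_lS {n} (l : lbl n) : bool :=
  match l with inl (inl (inr _)) => true | _ => false end.

Section Brackets.
Variables (F : fieldType) (n : nat).
Implicit Types (p q r w : lbl n) (v : nalg F n).

Lemma coordZ (c : F) v r : (c *: v) r = c * v r :> F.
Proof. by rewrite ffunE. Qed.

Lemma lie_bvr v q : lie v (bv q) = \sum_p v p *: bbr p q.
Proof.
apply: eq_bigr => p _; rewrite (bigD1 q) //= big1 => [|q' /negbTE nq].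
  by rewrite ffunE eqxx mulr1 addr0.
by rewrite ffunE nq mulr0 scale0r.
Qed.

Lemma lie_bvl v p : lie (bv p) v = \sum_q v q *: bbr p q.
Proof.
rewrite /lie (bigD1 p) //= [X in _ + X]big1 => [|p' /negbTE np].
  by rewrite addr0; apply: eq_bigr => q _; rewrite ffunE eqxx mul1r.
by apply: big1 => q _; rewrite ffunE np mul0r scale0r.
Qed.

Lemma lie_bv p q : lie (bv p) (bv q) = @bbr F n p q.
Proof.
rewrite lie_bvr (bigD1 p) //= big1 => [|p' /negbTE np].
  by rewrite ffunE eqxx scale1r addr0.
by rewrite ffunE np scale0r.
Qed.

Lemma sum_lbl (f : lbl n -> F) :
  \sum_w f w = \sum_i f (lE i) + \sum_k f (inl (inl (inr k))) +
               \sum_(w : wpair n) f (lW w) + \sum_tj f (inr tj).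
Proof. by rewrite !big_sumType. Qed.

Lemma sum_lS (f : lbl n -> F) : (forall w, ~~ is_lS w -> f w = 0) ->
  \sum_w f w = \sum_(0 <= k < 8) f (lS k).
Proof.
move=> f0; rewrite sum_lbl big_mkord.
have -> : \sum_i f (lE i) = 0 by apply: big1 => *; rewrite f0.
have -> : \sum_(w : wpair n) f (lW w) = 0 by apply: big1 => *; rewrite f0.
have -> : \sum_tj f (inr tj) = 0 by apply: big1 => *; rewrite f0.
by rewrite add0r !addr0; apply: eq_bigr => k _; rewrite /lS inord_val.
Qed.

Lemma btab_not_e p q r : btab p q = Some r -> ~~ is_e r.
Proof.
case: p => [[[i|k]|w]|[t i]]; case: q => [[[j|l]|w']|[t' j]] //=.
- by case: insub => //= ? [<-].
- by do ![case: ifP => _] => // -[<-].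
move: (nat_of_ord k) (nat_of_ord l) => a b.
by do 8?[case: a => [|a]] => //; do 8?[case: b => [|b]] => // -[<-].
Qed.

Lemma btab_lS p q r : btab p q = Some r -> is_lS r -> is_lS p && is_lS q.
Proof.
case: p => [[[i|k]|w]|[t i]]; case: q => [[[j|l]|w']|[t' j]] //=.
  by case: insub => //= ? [<-].
by do ![case: ifP => _] => // -[<-].
Qed.

Lemma eq_lS i j : (i < 8)%N -> (j < 8)%N -> (@lS n i == lS j) = (i == j).
Proof.
move=> hi hj; apply/eqP/eqP => [[] /(congr1 val)|->] //=.
by rewrite !inordK.
Qed.

Lemma bbr_coordE p q r : @bbr F n p q r =
  match btab p q with
  | Some s => (r == s)%:R
  | None => if btab q p is Some s then - (r == s)%:R else 0
  end :> F.
Proof. by rewrite /bbr; case: (btab p q) => [s|]; case: (btab q p) => [s'|]; rewrite !ffunE. Qed.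

Lemma btab_lT p q t j : (t < 3)%N -> btab p q = Some (lT t j) ->
  p = lE j /\ q = lS (t + 2).
Proof.
move=> t3; case: p => [[[i|k]|w]|[t' i]]; case: q => [[[i'|k']|w']|[t'' i']] //=.
- by case: insub.
- have -> : inl (inl (inr k')) = lS k' :> lbl n by rewrite /lS inord_val.
  by do ![case: ifP => [/eqP -> [/(congr1 (@nat_of_ord _)) + ->]|_]] => //;
    rewrite !inordK // => <-.
move: (nat_of_ord k) (nat_of_ord k') => a b.
by do 8?[case: a => [|a]] => //; do 8?[case: b => [|b]].
Qed.

Lemma bbr_coord_eq0 p q r : btab p q <> Some r -> btab q p <> Some r ->
  @bbr F n p q r = 0.
Proof.
move=> npq nqp; rewrite /bbr.
case Epq: (btab p q) => [s|].
  by rewrite ffunE; case: eqP => // rs; rewrite -rs in Epq.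
case Eqp: (btab q p) => [s|]; rewrite !ffunE //.
by case: eqP => [rs|]; [rewrite -rs in Eqp | rewrite oppr0].
Qed.

Lemma bbr_coord_e p q r : is_e r -> @bbr F n p q r = 0.
Proof.
by move=> er; apply: bbr_coord_eq0 => /btab_not_e; rewrite er.
Qed.

Lemma bbr_coord_lS p q r : is_lS r -> ~~ (is_lS p && is_lS q) ->
  @bbr F n p q r = 0.
Proof.
move=> sr /negbTE pq; apply: bbr_coord_eq0 => /btab_lS /(_ sr).
  by rewrite pq.
by rewrite andbC pq.
Qed.

Lemma lie_coord_e v v' r : is_e r -> lie v v' r = 0.
Proof.
move=> er; rewrite /lie sum_ffunE big1 // => p _; rewrite sum_ffunE big1 // => q _.
by rewrite coordZ bbr_coord_e ?mulr0.
Qed.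

Lemma lie_coord_lS v v' r : Defs.inE v -> is_lS r -> lie v v' r = 0.
Proof.
move=> Ev sr; rewrite /lie sum_ffunE big1 // => p _; rewrite sum_ffunE big1 // => q _.
rewrite coordZ; case: (boolP (is_e p)) => ep; last by rewrite Ev // !mul0r.
by rewrite bbr_coord_lS ?mulr0 //; case: p ep => [[[]|]|].
Qed.
End Brackets.

Section Derivation.
Variables (F : fieldType) (n : nat) (D : {linear nalg F n -> nalg F n}).
Hypothesis derD : is_derivation D.
Implicit Types (p q r w : lbl n).

Definition dcoef p r : F := D (bv p) r.

Lemma derivation_coord p q r : D (bbr p q) r =
  \sum_w dcoef p w * bbr w q r + \sum_w dcoef q w * bbr p w r.
Proof.
rewrite -lie_bv derD ffunE lie_bvr lie_bvl !sum_ffunE.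
by congr (_ + _); apply: eq_bigr => w _; rewrite ffunE.
Qed.

Lemma derivation_coord_lS k l m : D (bbr (lS k) (lS l)) (lS m : lbl n) =
  \sum_(0 <= j < 8) (dcoef (lS k) (lS j) * @bbr F n (lS j) (lS l) (lS m)
                     + dcoef (lS l) (lS j) * @bbr F n (lS k) (lS j) (lS m)).
Proof.
rewrite derivation_coord !sum_lS -?big_split // => w ws;
  by rewrite bbr_coord_lS ?mulr0 // negb_and ws ?orbT.
Qed.

Lemma dcoef_xuy_eq0 (i : 'I_n) k t : (t < 3)%N -> btab (lE i) (lS k) = None ->
  dcoef (lS k) (lS (t + 2)) = 0.
Proof.
move=> t3 eik; have := derivation_coord (lE i) (lS k) (lT t i).
rewrite {1}/bbr eik /= linear0 ffunE => ->.
rewrite [X in X + _]big1 ?add0r => [|w _]; last first.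
  rewrite bbr_coord_eq0 ?mulr0 // => [bw|/(btab_lT t3) []//].
  by have [ew _] := btab_lT t3 bw; rewrite ew eik in bw.
rewrite (bigD1 (lS (t + 2))) //= big1 ?addr0 => [|w nw].
  rewrite bbr_coordE /btab /=.
  by case: t t3 => [|[|[|]]] //= _; rewrite ?inordK //= eqxx mulr1.
rewrite bbr_coord_eq0 ?mulr0 // => bw.
  by have [_ ew] := btab_lT t3 bw; rewrite ew eqxx in nw.
by have [] := btab_lT t3 bw.
Qed.

Lemma dcoef_bracket k l s m : btab (lS k) (lS l) = Some s ->
  dcoef s (lS m) = \sum_(0 <= j < 8)
    (dcoef (lS k) (lS j) * @bbr F n (lS j) (lS l) (lS m)
     + dcoef (lS l) (lS j) * @bbr F n (lS k) (lS j) (lS m)).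
Proof. by move=> kl; rewrite -derivation_coord_lS /bbr kl. Qed.

Lemma dcoef_null_bracket k l m :
  btab (lS k : lbl n) (lS l) = None -> btab (lS l : lbl n) (lS k) = None ->
  0 = \sum_(0 <= j < 8)
    (dcoef (lS k) (lS j) * @bbr F n (lS j) (lS l) (lS m)
     + dcoef (lS l) (lS j) * @bbr F n (lS k) (lS j) (lS m)).
Proof. by move=> kl lk; rewrite -derivation_coord_lS /bbr kl lk linear0 ffunE. Qed.

Ltac structure_constants :=
  rewrite /index_iota /= ?big_cons ?big_nil ?bbr_coordE /btab /= ?inordK //= ?eq_lS //=
    ?(mulr0, mulr1, oppr0, addr0, add0r).

Lemma dcoef_diag_lS (i : 'I_n) :
  let d l := dcoef l l in
  [/\ d la = d lb /\ d lb = d lx, d lh = d lf /\ d lf = 3 * d la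
    & [/\ d ly = d lu, d lu = d lc & d lc = 2 * d la]].
Proof.
have := @dcoef_xuy_eq0 i; have := dcoef_null_bracket; have := dcoef_bracket.
(* Abstracting [dcoef] keeps the unifier from unfolding it during normalisation. *)
move: dcoef => d bracket null_bracket xuy0.
have c_ab : d lc lc = d la la + d lb lb.
  by rewrite (@bracket 0 1); structure_constants.
have xb0 : 0 = d lx lb.
  by rewrite (@null_bracket 0 2 5); structure_constants.
have ax_uy : 0 = d la lx + d lu ly.
  by rewrite (@null_bracket 0 3 6); structure_constants.
have f_ay : d lf lf = d la la + d ly ly.
  by rewrite (@bracket 0 4); structure_constants.
have h_ac : d lh lh = d la la + d lc lc.
  by rewrite (@bracket 0 5); structure_constants.
have h_bu : d lh lh = d lb lb + (d lu lu + d lu ly).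
  by rewrite (@bracket 1 3); structure_constants.
have hf_ba : d lh lf = d lb la.
  by rewrite (@bracket 1 4); structure_constants.
have h_by : d lh lh = d lb lb + (d lb lx + (d ly lu + d ly ly)).
  by rewrite (@bracket 1 4); structure_constants.
have ba_cu_cy : 0 = d lb la + (d lc lu + d lc ly).
  by rewrite (@null_bracket 1 5 7); structure_constants.
have hf_xa_yu : d lh lf = d lx la + d ly lu.
  by rewrite (@bracket 2 4); structure_constants.
have h_xy : d lh lh = d lx lb + (d lx lx + d ly ly).
  by rewrite (@bracket 2 4); structure_constants.
have f_xu : d lf lf = d lx lx + d lu lu.
  by rewrite (@bracket 2 3); structure_constants.
have xa_cy : 0 = d lx la + d lc ly.
  by rewrite (@null_bracket 2 5 7); structure_constants.
have ax0 : d la lx = 0 by apply: (xuy0 0 0); rewrite /btab /= ?inordK.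
have bx0 : d lb lx = 0 by apply: (xuy0 1 0); rewrite /btab /= ?inordK.
have cu0 : d lc lu = 0 by apply: (xuy0 5 1); rewrite /btab /= ?inordK.
rewrite ax0 add0r in ax_uy; rewrite cu0 add0r in ba_cu_cy.
have xa_ba : d lx la = d lb la by apply: (addIr (d lc ly)); rewrite -xa_cy -ba_cu_cy.
have yu0 : d ly lu = 0.
  by apply: (addrI (d lb la)); rewrite addr0 -{1}xa_ba -hf_xa_yu hf_ba.
rewrite -ax_uy addr0 in h_bu; rewrite bx0 yu0 !add0r in h_by; rewrite -xb0 add0r in h_xy.
have y_u : d ly ly = d lu lu by apply: (addrI (d lb lb)); rewrite -h_by -h_bu.
have x_b : d lx lx = d lb lb by apply: (addIr (d ly ly)); rewrite -h_xy -h_by.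
have a_x : d la la = d lx lx by apply: (addIr (d ly ly)); rewrite -f_ay f_xu y_u.
have y_2a : d ly ly = 2 * d la la.
  by apply: (addrI (d lb lb)); rewrite -h_by h_ac c_ab -x_b -a_x; ring.
rewrite /= -y_u y_2a f_ay c_ab h_ac c_ab -x_b -a_x y_2a.
by split; [split| split |split]; ring.
Qed.
End Derivation.

Section AdaptedBasis.
Variables (F : fieldType) (n : nat) (B : 'I_n -> nalg F n).
Hypothesis BE : forall i, Defs.inE (B i).

Lemma frakB_coord_lS k s : is_lS s -> frakB B k s = (s == k)%:R.
Proof.
case: s => [[[//|s]|//]|//] _; case: k => [[[i|k]|w]|[t i]] /=.
- by rewrite BE.
- by rewrite ffunE.
- by rewrite lie_coord_lS.
- by rewrite lie_coord_lS.
Qed.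

Lemma frakB_coord_e k s : is_e s -> ~~ is_e k -> frakB B k s = 0.
Proof.
case: s => [[[s|//]|//]|//] _; case: k => [[[//|k]|w]|[t i]] _ /=.
- by rewrite ffunE.
- by rewrite lie_coord_e.
- by rewrite lie_coord_e.
Qed.

Variables (D : {linear nalg F n -> nalg F n}) (M : lbl n -> lbl n -> F).
Hypothesis DM : forall l, D (frakB B l) = \sum_k M l k *: frakB B k.

Lemma frakB_diag_lS s : is_lS s -> M s s = dcoef D s s.
Proof.
case: s => [[[//|k]|//]|//] _; rewrite /dcoef -[bv _]/(frakB B (inl (inl (inr k)))).
rewrite DM sum_ffunE (bigD1 (inl (inl (inr k)))) // big1 => [|l kl].
  by rewrite coordZ frakB_coord_lS // eqxx mulr1 /= addr0.
by rewrite coordZ frakB_coord_lS // eq_sym (negbTE kl) mulr0.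
Qed.

Hypothesis DEW : forall v, Defs.inE v -> inW (D v).
Hypothesis Bfree : forall c : 'I_n -> F, \sum_i c i *: B i = 0 -> forall i, c i = 0.

Lemma frakB_diag_lE i : M (lE i) (lE i) = 0.
Proof.
suff: \sum_m M (lE i) (lE m) *: B m = 0 by move/Bfree.
apply/ffunP => l; rewrite sum_ffunE ffunE.
case: (boolP (is_e l)) => el; last first.
  by apply: big1 => m _; rewrite coordZ BE ?mulr0.
transitivity (D (B i) l); last by rewrite (DEW (BE i) el).
rewrite -[B i]/(frakB B (lE i)) DM sum_ffunE sum_lbl.
by do 3![rewrite [X in _ = _ + X]big1 ?addr0 => [|*];
  last by rewrite coordZ frakB_coord_e ?mulr0].
Qed.
End AdaptedBasis.

Unset Implicit Arguments.

Theorem mainTheorem3 (F : fieldType) (n : nat)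
  (charF : [pchar F] =i pred0) (n_ge1 : (0 < n)%N)
  (D : {linear nalg F n -> nalg F n}) (HD : Der1 D)
  (B : 'I_n -> nalg F n) (HB : basis_of_E B)
  (M : lbl n -> lbl n -> F)
  (HM : forall l, D (frakB B l) = \sum_k M l k *: frakB B k) :
  [/\ (forall i : 'I_n, M (lE i) (lE i) = 0),
      M la la = M lb lb /\ M lb lb = M lx lx,
      M lh lh = M lf lf /\ M lf lf = 3 * M la la
    & [/\ M ly ly = M lu lu, M lu lu = M lc lc & M lc lc = 2 * M la la]].
Proof.
have [derD DEW] := HD; have [BE Bfree _] := HB.
rewrite !(frakB_diag_lS BE HM) //.
have [abx hfa yuc] := dcoef_diag_lS derD (Ordinal n_ge1).
by split=> //; exact: frakB_diag_lE.
Qed.
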